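(* Let $\Gamma$ be a countably infinite group with a strictly decreasing sequence $\{\Gamma_n\}$ of finite-index normal subgroups with trivial intersection, $X=\varprojlim\Gamma/\Gamma_n$ with left translation action and quotient maps $\pi_n:X\to\Gamma/\Gamma_n$, and for $n\ge2$ let $\gamma_n\in\Gamma_{n-1}\setminus\Gamma_n$, $C_n=\pi_n^{-1}(\gamma_n\Gamma_n)$ and $X_+=\bigcup_{n\ge2}C_n$. Let $s_1,s_2,s_3\in\Gamma$ and $x\in X$ with $s_1x\in C_{n_1}$, $s_2x\in C_{n_2}$, $s_3x\in C_{n_3}$ where $n_1<\min(n_2,n_3)$. Then there is no $y\in X$ with $s_1y\notin X_+$, $s_2y\notin X_+$ and $s_3y\in X_+$.
   Context: $X=\varprojlim\Gamma/\Gamma_n$ is the compact group of compatible sequences in $\prod_n\Gamma/\Gamma_n$ containing $\Gamma$ as a subgroup; $\Gamma$ acts by left translation. *)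

From Stdlib Require Import List Arith.

Definition is_group {G : Type} (mul : G -> G -> G) (inv : G -> G) (e : G) : Prop :=
  (forall a b c, mul a (mul b c) = mul (mul a b) c) /\
  (forall a, mul e a = a) /\ (forall a, mul a e = a) /\
  (forall a, mul (inv a) a = e) /\ (forall a, mul a (inv a) = e).

Definition countably_infinite (G : Type) : Prop :=
  exists f : nat -> G, (forall m n, f m = f n -> m = n) /\ (forall g, exists n, f n = g).

Section Profinite.
Context {G : Type} (mul : G -> G -> G) (inv : G -> G) (e : G).

Definition is_subgroup (H : G -> Prop) : Prop :=
  H e /\ (forall a b, H a -> H b -> H (mul a b)) /\ (forall a, H a -> H (inv a)).

Definition is_normal (H : G -> Prop) : Prop :=
  forall g h, H h -> H (mul (mul g h) (inv g)).

Definition finite_index (H : G -> Prop) : Prop :=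
  exists reps : list G, forall g, exists r, In r reps /\ H (mul (inv r) g).

(* The chain Gamma_1 > Gamma_2 > ... (indices n >= 1; Gamma 0 is unused). *)
Definition good_chain (Gam : nat -> G -> Prop) : Prop :=
  (forall n, 1 <= n -> is_subgroup (Gam n) /\ is_normal (Gam n) /\ finite_index (Gam n)) /\
  (forall n, 1 <= n -> (forall g, Gam (S n) g -> Gam n g) /\
                       exists g, Gam n g /\ ~ Gam (S n) g) /\
  (forall g, (forall n, 1 <= n -> Gam n g) -> g = e).

(* Points of X = lim Gamma/Gamma_n, encoded by sequences of coset representatives
   x n (representing x n Gamma_n) that are compatible:
   pi_n(x_{n+1} Gamma_{n+1}) = x_n Gamma_n. *)
Definition inX (Gam : nat -> G -> Prop) (x : nat -> G) : Prop :=
  forall n, 1 <= n -> Gam n (mul (inv (x n)) (x (S n))).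

Definition act (s : G) (x : nat -> G) : nat -> G := fun n => mul s (x n).

(* x in C_n  iff  pi_n(x) = gamma_n Gamma_n *)
Definition inC (Gam : nat -> G -> Prop) (gam : nat -> G) (n : nat) (x : nat -> G) : Prop :=
  Gam n (mul (inv (gam n)) (x n)).

Definition inXplus (Gam : nat -> G -> Prop) (gam : nat -> G) (x : nat -> G) : Prop :=
  exists n, 2 <= n /\ inC Gam gam n x.

End Profinite.

(* Write [a ~_k b] when [a Gamma_k = b Gamma_k].  A point of [C_n] lies over the trivial
   coset at every level [k < n], because [gamma_n] lies in [Gamma_(n-1)].  Hence [s2 x] and
   [s3 x] both lie over the trivial coset at level [n1], which forces [s2 ~_n1 s3].  If
   [s3 y] lies in [C_m], then for [m <= n1] the point [s2 y] lies over the same coset at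
   level [m], so [s2 y] is in [C_m]; for [m > n1] the points [s2 y] and [s2 x] agree at
   level [n1], hence so do [s1 y] and [s1 x], and [s1 y] is in [C_n1].
   Only normality and monotonicity of the chain and [gamma_n \in Gamma_(n-1)] are used. *)
From Stdlib Require Import Arith Lia.

Section GroupFacts.
Context {G : Type} {mul : G -> G -> G} {inv : G -> G} {e : G}.
Hypothesis Hgrp : is_group mul inv e.

Lemma mulgA a b c : mul a (mul b c) = mul (mul a b) c.
Proof. apply Hgrp. Qed.

Lemma mul1g a : mul e a = a.
Proof. apply Hgrp. Qed.

Lemma mulg1 a : mul a e = a.
Proof. apply Hgrp. Qed.

Lemma mulVg a : mul (inv a) a = e.
Proof. apply Hgrp. Qed.

Lemma mulgV a : mul a (inv a) = e.
Proof. apply Hgrp. Qed.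

Lemma mulKg a b : mul (inv a) (mul a b) = b.
Proof. now rewrite mulgA, mulVg, mul1g. Qed.

Lemma invgK a : inv (inv a) = a.
Proof. now rewrite <- (mulg1 (inv (inv a))), <- (mulVg a), mulgA, mulVg, mul1g. Qed.

Lemma invg1 : inv e = e.
Proof. now rewrite <- (mul1g (inv e)), mulgV. Qed.

Lemma invMg a b : inv (mul a b) = mul (inv b) (inv a).
Proof.
  assert (Hright : mul (mul a b) (mul (inv b) (inv a)) = e).
  { now rewrite mulgA, <- (mulgA a b), mulgV, mulg1, mulgV. }
  now rewrite <- (mulg1 (inv (mul a b))), <- Hright, mulgA, mulVg, mul1g.
Qed.

End GroupFacts.

Section Cosets.
Context {G : Type} {mul : G -> G -> G} {inv : G -> G} {e : G}.
Hypothesis Hgrp : is_group mul inv e.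
Context {Gam : nat -> G -> Prop}.
Hypothesis Hsub : forall n, 1 <= n -> is_subgroup mul inv e (Gam n).
Hypothesis Hnormal : forall n, 1 <= n -> is_normal mul inv (Gam n).
Hypothesis Hdecr : forall n, 1 <= n -> forall g, Gam (S n) g -> Gam n g.

Definition same_coset (k : nat) (a b : G) : Prop := Gam k (mul (inv a) b).

Lemma same_coset_sym k a b : 1 <= k -> same_coset k a b -> same_coset k b a.
Proof.
  unfold same_coset; intros hk hab.
  replace (mul (inv b) a) with (inv (mul (inv a) b))
    by now rewrite (invMg Hgrp), (invgK Hgrp).
  now apply Hsub.
Qed.

Lemma same_coset_trans k a b c :
  1 <= k -> same_coset k a b -> same_coset k b c -> same_coset k a c.
Proof.
  unfold same_coset; intros hk hab hbc.
  replace (mul (inv a) c) with (mul (mul (inv a) b) (mul (inv b) c))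
    by now rewrite <- (mulgA Hgrp), (mulgA Hgrp b), (mulgV Hgrp), (mul1g Hgrp).
  now apply Hsub.
Qed.

Lemma same_coset_mul2l k g a b : same_coset k (mul g a) (mul g b) <-> same_coset k a b.
Proof.
  unfold same_coset.
  now rewrite (invMg Hgrp), <- (mulgA Hgrp), (mulKg Hgrp).
Qed.

Lemma same_coset_mulr k c a b :
  1 <= k -> same_coset k a b -> same_coset k (mul a c) (mul b c).
Proof.
  unfold same_coset; intros hk hab.
  replace (mul (inv (mul a c)) (mul b c))
    with (mul (mul (inv c) (mul (inv a) b)) (inv (inv c)))
    by now rewrite (invgK Hgrp), (invMg Hgrp), !(mulgA Hgrp).
  now apply Hnormal.
Qed.

Lemma same_coset_mul2r k c a b :
  1 <= k -> same_coset k (mul a c) (mul b c) <-> same_coset k a b.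
Proof.
  intros hk; split; [|now apply same_coset_mulr].
  intros habc. apply (same_coset_mulr k (inv c)) in habc; [|exact hk].
  now rewrite <- !(mulgA Hgrp), (mulgV Hgrp), !(mulg1 Hgrp) in habc.
Qed.

Lemma Gam_mono k n g : 1 <= k -> k <= n -> Gam n g -> Gam k g.
Proof. intros hk hkn; induction hkn; auto. intros hg. apply IHhkn, Hdecr; [lia|exact hg]. Qed.

Lemma inX_same_coset z k n :
  inX mul inv Gam z -> 1 <= k -> k <= n -> same_coset k (z k) (z n).
Proof.
  intros hz hk hkn; induction hkn.
  - unfold same_coset. rewrite (mulVg Hgrp). now apply Hsub.
  - apply (same_coset_trans _ _ (z m)); [exact hk|exact IHhkn|].
    apply (Gam_mono _ m); [exact hk|exact hkn|]. apply hz; lia.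
Qed.

Lemma inX_act s z : inX mul inv Gam z -> inX mul inv Gam (act mul s z).
Proof. intros hz n hn. apply same_coset_mul2l, hz, hn. Qed.

Lemma inC_same_coset gam n z w :
  1 <= n -> same_coset n (z n) (w n) -> inC mul inv Gam gam n z -> inC mul inv Gam gam n w.
Proof. intros hn hzw hz. exact (same_coset_trans _ _ _ _ hn hz hzw). Qed.

Lemma inC_act_same_coset gam n s s' y :
  1 <= n -> same_coset n s s' ->
  inC mul inv Gam gam n (act mul s y) -> inC mul inv Gam gam n (act mul s' y).
Proof. intros hn hss'. apply inC_same_coset; [exact hn|]. now apply same_coset_mulr. Qed.

Context {gam : nat -> G}.
Hypothesis Hgam_prev : forall n, 2 <= n -> Gam (n - 1) (gam n).

Lemma inC_trivial_below z n k :
  inX mul inv Gam z -> 2 <= n -> inC mul inv Gam gam n z -> 1 <= k -> k < n ->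
  same_coset k e (z k).
Proof.
  intros hz hn hzn hk hkn.
  assert (hgam : same_coset (n - 1) e (gam n)).
  { unfold same_coset. rewrite (invg1 Hgrp), (mul1g Hgrp). now apply Hgam_prev. }
  assert (hzn' : same_coset k e (z n)).
  { apply (Gam_mono _ (n - 1)); [exact hk|lia|].
    apply (same_coset_trans _ _ (gam n)); [lia|exact hgam|].
    apply (Gam_mono _ n); [lia|lia|exact hzn]. }
  apply (same_coset_trans _ _ (z n)); [exact hk|exact hzn'|].
  apply same_coset_sym, inX_same_coset; auto; lia.
Qed.

Lemma translates_in_C_same_coset x s s' n n' k :
  inX mul inv Gam x -> 2 <= n -> 2 <= n' ->
  inC mul inv Gam gam n (act mul s x) -> inC mul inv Gam gam n' (act mul s' x) ->
  1 <= k -> k < n -> k < n' -> same_coset k s s'.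
Proof.
  intros hx hn hn' hsx hs'x hk hkn hkn'.
  apply (same_coset_mul2r k (x k)); [exact hk|].
  apply (same_coset_trans _ _ e); [exact hk| |].
  - apply same_coset_sym; [exact hk|].
    exact (inC_trivial_below (act mul s x) n k (inX_act s x hx) hn hsx hk hkn).
  - exact (inC_trivial_below (act mul s' x) n' k (inX_act s' x hx) hn' hs'x hk hkn').
Qed.

Lemma inC_act_transfer x y s1 s2 s3 n1 n2 m :
  inX mul inv Gam x -> inX mul inv Gam y -> 2 <= n1 -> n1 < n2 -> n1 < m ->
  same_coset n1 s2 s3 ->
  inC mul inv Gam gam n2 (act mul s2 x) -> inC mul inv Gam gam m (act mul s3 y) ->
  inC mul inv Gam gam n1 (act mul s1 x) -> inC mul inv Gam gam n1 (act mul s1 y).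
Proof.
  intros hx hy hn1 h12 h1m h23 hs2x hs3y.
  assert (hx2 : same_coset n1 e (mul s2 (x n1))).
  { apply (inC_trivial_below (act mul s2 x) n2); auto using inX_act; lia. }
  assert (hy2 : same_coset n1 e (mul s2 (y n1))).
  { apply (same_coset_trans _ _ (mul s3 (y n1))); [lia| |].
    - apply (inC_trivial_below (act mul s3 y) m); auto using inX_act; lia.
    - apply same_coset_sym, same_coset_mulr; [lia|lia|exact h23]. }
  apply inC_same_coset; [lia|]. apply same_coset_mul2l.
  apply (same_coset_mul2l _ s2), (same_coset_trans _ _ e); [lia| |exact hy2].
  apply same_coset_sym; [lia|exact hx2].
Qed.

End Cosets.

Theorem lemma4p6 (G : Type) (mul : G -> G -> G) (inv : G -> G) (e : G)
  (Hgrp : is_group mul inv e) (Hcount : countably_infinite G)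
  (Gam : nat -> G -> Prop) (Hchain : good_chain mul inv e Gam)
  (gam : nat -> G)
  (Hgam : forall n, 2 <= n -> Gam (n - 1) (gam n) /\ ~ Gam n (gam n))
  (s1 s2 s3 : G) (x : nat -> G) (hx : inX mul inv Gam x)
  (n1 n2 n3 : nat) (h12 : n1 < n2) (h13 : n1 < n3)
  (hx1 : 2 <= n1 /\ inC mul inv Gam gam n1 (act mul s1 x))
  (hx2 : 2 <= n2 /\ inC mul inv Gam gam n2 (act mul s2 x))
  (hx3 : 2 <= n3 /\ inC mul inv Gam gam n3 (act mul s3 x)) :
  ~ (exists y : nat -> G, inX mul inv Gam y /\
       ~ inXplus mul inv Gam gam (act mul s1 y) /\
       ~ inXplus mul inv Gam gam (act mul s2 y) /\
       inXplus mul inv Gam gam (act mul s3 y)).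
Proof.
  destruct Hchain as (Hsn & Hdec & _).
  assert (Hsub : forall n, 1 <= n -> is_subgroup mul inv e (Gam n)) by apply Hsn.
  assert (Hnormal : forall n, 1 <= n -> is_normal mul inv (Gam n)) by apply Hsn.
  assert (Hdecr : forall n, 1 <= n -> forall g, Gam (S n) g -> Gam n g) by apply Hdec.
  assert (Hgam_prev : forall n, 2 <= n -> Gam (n - 1) (gam n)) by apply Hgam.
  destruct hx1 as [hn1 hs1x], hx2 as [hn2 hs2x], hx3 as [hn3 hs3x].
  intros (y & hy & hs1y & hs2y & m & hm & hs3y).
  assert (h23 := translates_in_C_same_coset Hgrp Hsub Hnormal Hdecr Hgam_prev
                   x s2 s3 n2 n3 n1 hx hn2 hn3 hs2x hs3x ltac:(lia) h12 h13).
  destruct (le_lt_dec m n1) as [hmn1|hn1m].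
  - apply hs2y. exists m. split; [exact hm|].
    apply (inC_act_same_coset Hgrp Hsub Hnormal gam m s3 s2 y); [lia| |exact hs3y].
    apply (same_coset_sym Hgrp Hsub); [lia|].
    apply (Gam_mono Hdecr m n1); [lia|exact hmn1|exact h23].
  - apply hs1y. exists n1. split; [exact hn1|].
    exact (inC_act_transfer Hgrp Hsub Hnormal Hdecr Hgam_prev x y s1 s2 s3 n1 n2 m
             hx hy hn1 h12 hn1m h23 hs2x hs3y hs1x).
Qed.
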